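(* For all $s>0$ and $K\in\mathbb{N}$, the function $f^{s,K}_{square}(t):=\frac{2s}{K}\sum_{k=1}^K\big([t-\tfrac{sk}{K}]_++[-t-\tfrac{sk}{K}]_+\big)$ satisfies $$\sup_{t\in[-s,s]}|f^{s,K}_{square}(t)-t^2|\le s^2\Big(\frac1K+\frac1{K^2}\Big).$$
   Context: $[t]_+=\max(t,0)$. *)

From mathcomp Require Import all_boot all_order all_algebra.
Set Implicit Arguments. Unset Strict Implicit. Unset Printing Implicit Defensive.
Import Order.TTheory GRing.Theory Num.Theory.
Local Open Scope ring_scope.

Definition pos_part (R : realDomainType) (t : R) : R := Num.max t 0.

Definition f_square (R : realFieldType) (s : R) (K : nat) (t : R) : R :=
  (2 * s / K%:R) * \sum_(1 <= k < K.+1)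
      (pos_part (t - s * k%:R / K%:R) + pos_part (- t - s * k%:R / K%:R)).

(** For [t >= 0] put [h = s / K] and let [j h <= t <= (j + 1) h] with [j <= K].
    Only the first [j] ramps [[t - h k]_+] are active and the mirrored ramps
    vanish, so [f(t) = 2 h j t - h^2 j (j + 1)] and
    [t^2 - f(t) = (t - j h)^2 + h^2 j <= h^2 + h^2 K = s^2 (1/K + 1/K^2)].
    Negative [t] follow because [f] is even. *)

From mathcomp Require Import all_boot all_order all_algebra.
From mathcomp Require Import ring lra.
Set Implicit Arguments. Unset Strict Implicit. Unset Printing Implicit Defensive.
Import Order.TTheory GRing.Theory Num.Theory.
Local Open Scope ring_scope.

Section SquareApproximation.

Variable R : realFieldType.
Implicit Types (s t h : R) (K n j : nat).

Lemma ge0_pos_part t : 0 <= t -> pos_part t = t.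
Proof. exact: max_l. Qed.

Lemma le0_pos_part t : t <= 0 -> pos_part t = 0.
Proof. exact: max_r. Qed.

Lemma f_squareN s K t : f_square s K (- t) = f_square s K t.
Proof. by rewrite /f_square; congr (_ * _); apply: eq_bigr => k _; rewrite opprK addrC. Qed.

Lemma exists_grid_cell h t n : 0 <= h -> 0 <= t <= n%:R * h ->
  exists2 j, (j <= n)%N & j%:R * h <= t <= j.+1%:R * h.
Proof.
move=> h0; elim: n => [|n IH] /andP[t0 tn].
  by exists 0%N => //; apply/andP; split; lra.
have [tn'|tn'] := lerP t (n%:R * h).
  by have [j jn tj] := IH (introT andP (conj t0 tn')); exists j => //; apply: ltnW.
by exists n => //; apply/andP; split; lra.
Qed.

Lemma sum_pos_part_ramps h t n j : 0 <= h -> (j <= n)%N ->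
  j%:R * h <= t <= j.+1%:R * h ->
  \sum_(1 <= k < n.+1) pos_part (t - h * k%:R) = \sum_(1 <= k < j.+1) (t - h * k%:R).
Proof.
move=> h0 jn /andP[tj tj1].
rewrite (@big_cat_nat _ _ _ j.+1) //= -[RHS]addr0; congr (_ + _).
  apply: eq_big_nat => k /andP[_ kj]; rewrite ge0_pos_part // subr_ge0 mulrC.
  by apply: le_trans tj; rewrite ler_wpM2r // ler_nat -ltnS.
rewrite big_nat_cond big1 // => k /andP[/andP[jk _] _].
rewrite le0_pos_part // subr_le0 mulrC.
by apply: le_trans tj1 _; rewrite ler_wpM2r // ler_nat.
Qed.

Lemma sum_ramps h t j :
  2 * \sum_(1 <= k < j.+1) (t - h * k%:R) = 2 * j%:R * t - h * j%:R * (j%:R + 1).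
Proof.
elim: j => [|j IH]; first by rewrite big_geq //; ring.
by rewrite big_nat_recr //= mulrDr IH -natr1; ring.
Qed.

Lemma f_square_on_cell s K t j : 0 <= s -> 0 <= t -> (j <= K)%N ->
  j%:R * (s / K%:R) <= t <= j.+1%:R * (s / K%:R) ->
  f_square s K t = 2 * (s / K%:R) * j%:R * t - (s / K%:R) ^+ 2 * j%:R * (j%:R + 1).
Proof.
move=> s0 t0 jK tj; set h := s / K%:R.
have h0 : 0 <= h by rewrite divr_ge0.
have mirrored_ramps_vanish k : pos_part (- t - s * k%:R / K%:R) = 0.
  rewrite le0_pos_part // -mulrA.
  by have := mulr_ge0 s0 (divr_ge0 (ler0n R k) (ler0n R K)); lra.
rewrite /f_square -[2 * s / _]mulrA -/h.
under eq_bigr do rewrite mirrored_ramps_vanish addr0 mulrAC -/h.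
by rewrite (sum_pos_part_ramps (j := j)) // mulrAC sum_ramps; ring.
Qed.

Lemma f_square_error_ge0 s K t : 0 < s -> (0 < K)%N -> 0 <= t <= s ->
  `|f_square s K t - t ^+ 2| <= s ^+ 2 * (K%:R^-1 + (K%:R ^+ 2)^-1).
Proof.
move=> s0 K0 /andP[t0 ts]; set h := s / K%:R.
have K0R : K%:R != 0 :> R by rewrite pnatr_eq0 -lt0n.
have sKh : s = K%:R * h by rewrite /h mulrC divfK.
have h0 : 0 <= h by rewrite divr_ge0 // ltW.
have [j jK tj] : exists2 j, (j <= K)%N & j%:R * h <= t <= j.+1%:R * h.
  by apply: exists_grid_cell => //; rewrite -sKh t0.
rewrite (f_square_on_cell (ltW s0) t0 jK tj); case/andP: tj => tj tj1.
have -> : s ^+ 2 * (K%:R^-1 + (K%:R ^+ 2)^-1) = h ^+ 2 + h ^+ 2 * K%:R.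
  by rewrite sKh; field.
have -> : 2 * h * j%:R * t - h ^+ 2 * j%:R * (j%:R + 1) - t ^+ 2
        = - ((t - j%:R * h) ^+ 2 + h ^+ 2 * j%:R) by ring.
rewrite normrN ger0_norm; last by rewrite addr_ge0 ?sqr_ge0 // mulr_ge0 ?sqr_ge0.
have offset_le_h : (t - j%:R * h) ^+ 2 <= h ^+ 2.
  by rewrite ler_sqr ?nnegrE; move: tj1; rewrite -natr1; lra.
have j_le_K : h ^+ 2 * j%:R <= h ^+ 2 * K%:R by rewrite ler_wpM2l ?sqr_ge0 ?ler_nat.
lra.
Qed.

End SquareApproximation.

Theorem lemma12 (R : realFieldType) (s : R) (K : nat) :
  0 < s -> (1 <= K)%N ->
  forall t : R, - s <= t <= s ->
    `|f_square s K t - t ^+ 2| <= s ^+ 2 * (K%:R^-1 + (K%:R ^+ 2)^-1).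
Proof.
move=> s0 K1 t /andP[st ts].
have [t0|t0] := lerP 0 t; first by apply: f_square_error_ge0; rewrite ?t0.
rewrite -f_squareN -sqrrN; apply: f_square_error_ge0 => //.
by apply/andP; split; lra.
Qed.
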